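(* Let $(V,D)$ be a smooth projective toric surface with toric boundary $D$, and let $\iota$ be a nonsymplectic involution of $(V,D)$, i.e. an involution of $V$ normalizing the torus $(\mathbb{C}^* )^2\subset V$ whose induced action on the cocharacter lattice $N\cong\mathbb{Z}^2$ has determinant $-1$. Assume the fixed locus $V^\iota$ contains no torus-fixed point of $V$. Then $V$ admits a toric morphism $\pi\colon V\to\mathbb{P}^1$ with general fiber $\mathbb{P}^1$ and with two torus-invariant sections $s_1,s_2$, which commutes with a nontrivial involution of the base $\mathbb{P}^1$, and exactly one of the following holds: (E0) $V^\iota$ consists of four points, two on each $s_i$; (E1) $V^\iota$ is a fiber of $\pi$ together with two points, one on each $s_i$; (E2) $V^\iota$ is the union of two fibers of $\pi$. Moreover, the fan of $V$ is an $\iota$-invariant subdivision of the fan of a Hirzebruch surface $\mathbb{F}_n$, with $n$ even in cases (E0) and (E2) and $n$ odd in case (E1).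
   Context: Standard toric geometry; $\mathbb{F}_n$ denotes the Hirzebruch surface $\mathbb{P}(\mathcal{O}\oplus\mathcal{O}(n))$ over $\mathbb{P}^1$. *)

From mathcomp Require Import all_boot all_algebra.
From mathcomp Require Import reals complex.
Set Implicit Arguments.
Unset Strict Implicit.
Unset Printing Implicit Defensive.
Import GRing.Theory Num.Theory.
Local Open Scope ring_scope.

(* lattice N = Z^2 (and its dual M = Z^2) *)
Definition Z2 := (int * int)%type.
Definition det2 (u w : Z2) : int := u.1 * w.2 - u.2 * w.1.
Definition negZ2 (u : Z2) : Z2 := (- u.1, - u.2).
Definition pairZ2 (p u : Z2) : int := p.1 * u.1 + p.2 * u.2.
(* m_u := generator of u^perp in M (for primitive u) *)
Definition mperp (u : Z2) : Z2 := (- u.2, u.1).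

(* two-dimensional smooth cone spanned by consecutive rays u, w of S
   (positively oriented, unimodular, no ray of S in its interior) *)
Definition is_cone (S : seq Z2) (u w : Z2) : bool :=
  [&& u \in S, w \in S, det2 u w == 1 &
      ~~ has (fun v => (0 < det2 u v) && (0 < det2 v w)) S].

(* smooth complete fan in N_R = R^2, given by its set of rays
   (complete = smooth projective in dimension 2) *)
Definition smooth_complete_fan (S : seq Z2) : Prop :=
  [/\ uniq S, S != [::] & forall u, u \in S -> exists w, is_cone S u w].

Definition subdivides (S S' : seq Z2) : Prop :=
  smooth_complete_fan S' /\
  forall u w, is_cone S u w -> exists u' w', [/\ is_cone S' u' w',
     0 <= det2 u' u, 0 <= det2 u w', 0 <= det2 u' w & 0 <= det2 w w'].

(* fan of the Hirzebruch surface F_n: rays e, f, -f, -e + n f,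
   where (e, f) is a lattice basis *)
Definition hirzebruch_fan (e f : Z2) (n : nat) : seq Z2 :=
  [:: e; f; negZ2 f; (n%:Z * f.1 - e.1, n%:Z * f.2 - e.2)].

Record mat2 := Mat2 { a11 : int; a12 : int; a21 : int; a22 : int }.
Definition mapply (A : mat2) (u : Z2) : Z2 :=
  (a11 A * u.1 + a12 A * u.2, a21 A * u.1 + a22 A * u.2).
Definition det_mat2 (A : mat2) : int := a11 A * a22 A - a12 A * a21 A.

Section Points.
Variable R : realType.
Local Notation C := (R[i]).

(* character chi^m evaluated at the torus point (x,y) in Hom(M, C^* ) *)
Definition chr (x y : C) (m : Z2) : C := x ^ m.1 * y ^ m.2.

(* points of the toric surface X_S, via the orbit decomposition:
   VTor x y  : point of the open torus (C^* )^2,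
   VRay u c  : point of the orbit O(u) ~ Hom(u^perp, C^* ), c = value on m_u,
   VFix u w  : the torus fixed point of the cone (u,w). *)
Inductive vpoint :=
| VTor of C & C
| VRay of Z2 & C
| VFix of Z2 & Z2.

Definition vvalid (S : seq Z2) (p : vpoint) : Prop :=
  match p with
  | VTor x y => x != 0 /\ y != 0
  | VRay u c => u \in S /\ c != 0
  | VFix u w => is_cone S u w
  end.

(* the automorphism  p |-> t . A_*(p)  of X_S, where A in GL_2(Z) preserves
   the fan and t = (t1,t2) in the torus: this is the general automorphism of
   X_S normalizing the torus. *)
Definition vact (A : mat2) (t1 t2 : C) (p : vpoint) : vpoint :=
  match p with
  | VTor x y =>
      VTor (t1 * chr x y (a11 A, a12 A)) (t2 * chr x y (a21 A, a22 A))
  | VRay u c =>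
      let u' := mapply A u in
      VRay u' (c ^ det_mat2 A * chr t1 t2 (mperp u'))
  | VFix u w =>
      if det_mat2 A == 1 then VFix (mapply A u) (mapply A w)
      else VFix (mapply A w) (mapply A u)
  end.

(* points of P^1 = X_{ {1,-1} }: torus point, fixed point of ray +1,
   fixed point of ray -1 *)
Inductive p1point :=
| P1Tor of C
| P1Pos
| P1Neg.

Definition p1valid (z : p1point) : Prop :=
  match z with P1Tor c => c != 0 | _ => True end.

(* toric morphism X_S -> P^1 induced by the lattice map  pairZ2 p : N -> Z *)
Definition vproj (p : Z2) (q : vpoint) : p1point :=
  match q with
  | VTor x y => P1Tor (chr x y p)
  | VRay u c =>
      if pairZ2 p u == 0 then P1Tor (c ^ (if p == mperp u then 1 else -1 : int))
      else if 0 < pairZ2 p u then P1Pos else P1Neg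
  | VFix u w => if 0 < pairZ2 p u + pairZ2 p w then P1Pos else P1Neg
  end.

(* torus-normalizing automorphism of P^1: z |-> s z^eps (eps = +-1) *)
Definition p1act (eps : bool) (s : C) (z : p1point) : p1point :=
  match z with
  | P1Tor c => P1Tor (s * (if eps then c else c^-1))
  | P1Pos => if eps then P1Pos else P1Neg
  | P1Neg => if eps then P1Neg else P1Pos
  end.

(* the torus-invariant curve D_u (closure of the orbit O(u)) *)
Definition on_divisor (S : seq Z2) (u : Z2) (q : vpoint) : Prop :=
  vvalid S q /\
  match q with
  | VTor _ _ => False
  | VRay u' _ => u' = u
  | VFix a b => a = u \/ b = u
  end.

Definition in_fiber (S : seq Z2) (p : Z2) (z : p1point) (q : vpoint) : Prop :=
  vvalid S q /\ vproj p q = z.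

(* toric morphism  pi_p : X_S -> P^1 with general fiber P^1: p is a
   primitive linear form mapping every cone of S into a cone of the fan of
   P^1, and the two rays +-v of ker p belong to S. *)
Definition toric_ruling (S : seq Z2) (p v : Z2) : Prop :=
  [/\ gcdz p.1 p.2 = 1,
      forall u w, is_cone S u w -> 0 <= pairZ2 p u * pairZ2 p w,
      v \in S, negZ2 v \in S & pairZ2 p v = 0].

End Points.

(* The involution acts on the lattice N as a reflection A.  A nonzero A-fixed vector h
   spans a line that no cone of the fan crosses (A would map such a cone onto itself,
   fixing its torus-fixed point), so walking around the fan from either side of the line
   lands on opposite rays a and -a, both fixed by A.  If e is the ray following a, then
   A e = k a - e, and the A-invariant fan (e, a, -a, k a - e) of F_k is refined by the fan
   of V, the projection along a being the ruling.  In the torus coordinates (X, Y) dual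
   to the frame (a, e) the involution reads (X, Y) |-> (tau X Y^k, s / Y) with
   tau^2 s^k = 1, so its fixed points lie over the square roots +-r of s in the base, and
   the whole fiber over such a root is fixed exactly when tau r^k = 1; the sign of
   tau r^k and the parity of k give the three cases. *)

From mathcomp Require Import all_boot all_order all_algebra.
From mathcomp Require Import reals complex.
From mathcomp Require Import zify ring.
Import Order.TTheory GRing.Theory Num.Theory.
Local Open Scope ring_scope.

Lemma det2C u w : det2 u w = - det2 w u.
Proof. rewrite /det2; ring. Qed.

Lemma det2xx u : det2 u u = 0.
Proof. rewrite /det2; ring. Qed.

Lemma det2Nl u w : det2 (negZ2 u) w = - det2 u w.
Proof. rewrite /det2 /negZ2 /=; ring. Qed.

Lemma det2Nr u w : det2 u (negZ2 w) = - det2 u w.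
Proof. rewrite /det2 /negZ2 /=; ring. Qed.

Lemma negZ2K : involutive negZ2.
Proof. by case=> x y; rewrite /negZ2 /= !opprK. Qed.

Lemma det2_plucker h x y z :
  det2 h x * det2 y z - det2 h y * det2 x z + det2 h z * det2 x y = 0.
Proof. rewrite /det2; ring. Qed.

Lemma det2_coord u {a e} : det2 a e = 1 ->
  u = (det2 u e * a.1 + det2 a u * e.1, det2 u e * a.2 + det2 a u * e.2).
Proof.
case: u => u1 u2; rewrite /det2 /= => dae.
by congr pair; rewrite -[LHS]mulr1 -dae; ring.
Qed.

Lemma det_mapply A u w : det2 (mapply A u) (mapply A w) = det_mat2 A * det2 u w.
Proof. rewrite /det2 /mapply /det_mat2 /=; ring. Qed.

Lemma mapplyN A u : mapply A (negZ2 u) = negZ2 (mapply A u).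
Proof. rewrite /mapply /negZ2 /=; congr pair; ring. Qed.

Lemma mulz_eq1 (k m : int) : k * m = 1 -> k = 1 \/ k = -1.
Proof.
by rewrite mulrC => /intUnitRing.unitzPl; rewrite qualifE => /orP[/eqP|/eqP]; [left|right].
Qed.

Lemma primitive_collinear {a e u w} : det2 a e = 1 -> det2 u w = 1 -> det2 a u = 0 ->
  u = a \/ u = negZ2 a.
Proof.
move=> dae duw dau; have := det2_coord u dae; rewrite dau !mul0r !addr0 => ua.
have : det2 u e * det2 a w = 1 by rewrite -duw [in RHS]ua /det2 /=; ring.
by case/mulz_eq1=> ce; rewrite ua ce ?mul1r ?mulN1r; [left; case: (a) | right].
Qed.

Section Cones.
Variable S : seq Z2.

Lemma cone_det {u w} : is_cone S u w -> det2 u w = 1.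
Proof. by case/and4P => _ _ /eqP. Qed.

Lemma cone_meml {u w} : is_cone S u w -> u \in S.
Proof. by case/and4P. Qed.

Lemma cone_memr {u w} : is_cone S u w -> w \in S.
Proof. by case/and4P. Qed.

Lemma cone_empty {u w v} : is_cone S u w -> v \in S ->
  0 < det2 u v -> 0 < det2 v w -> False.
Proof. by case/and4P => _ _ _ /hasPn H /H /= /negP H' h1 h2; apply: H'; rewrite h1 h2. Qed.

Lemma cone_not_straddle a u w : a \in S -> negZ2 a \in S -> is_cone S u w ->
  0 <= det2 a u * det2 a w.
Proof.
move=> aS naS C; rewrite leNgt; apply/negP => neg.
case: (ltrgtP (det2 a u) 0) => hu; last by move: neg; rewrite hu mul0r ltxx.
- have hw : 0 < det2 a w by nia.
  by apply: (cone_empty C aS _ hw); rewrite det2C oppr_gt0.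
- have hw : 0 < det2 (negZ2 a) w by rewrite det2Nl; nia.
  by apply: (cone_empty C naS _ hw); rewrite det2Nr det2C opprK.
Qed.

Definition next_ray u := nth u S (find (is_cone S u) S).

Hypothesis HS : smooth_complete_fan S.

Lemma is_cone_next {u} : u \in S -> is_cone S u (next_ray u).
Proof.
have [_ _ H] := HS; case/H=> w Cw; apply: nth_find.
by apply/hasP; exists w => //; apply: cone_memr Cw.
Qed.

Lemma exists_cone : exists u w, is_cone S u w.
Proof.
have [_ /eqP Sne _] := HS.
have [u uS] : exists u, u \in S by case: (S) Sne => // u s _; exists u; rewrite mem_head.
by exists u, (next_ray u); apply: is_cone_next.
Qed.

Lemma halfplane_exit h u : u \in S -> 0 < det2 h u ->
  exists2 x, x \in S & 0 < det2 h x /\ det2 h (next_ray x) <= 0.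
Proof.
move=> uS hu.
have [/hasP[x xS /andP[hx hnx]]|/hasPn stay] :=
  boolP (has (fun x => (0 < det2 h x) && (det2 h (next_ray x) <= 0)) S).
  by exists x.
exfalso; pose walk i := iter i next_ray u.
have walkS i : walk i \in S.
  by elim: i => //= i IH; apply: cone_memr (is_cone_next IH).
have walk_pos i : 0 < det2 h (walk i).
  elim: i => //= i IH; have := stay _ (walkS i).
  by rewrite IH /= -ltNge.
(* inside the half-plane the walk turns strictly monotonically, so it never revisits a ray *)
have turn i j : 0 < det2 (walk i) (walk (j.+1 + i)%N).
  elim: j => [|j IH]; first by rewrite (cone_det (is_cone_next (walkS i))).
  have step : det2 (walk (j.+1 + i)%N) (walk (j.+2 + i)%N) = 1.
    exact: cone_det (is_cone_next (walkS _)).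
  have := det2_plucker h (walk i) (walk (j.+1 + i)%N) (walk (j.+2 + i)%N).
  have := walk_pos i; have := walk_pos (j.+1 + i)%N; have := walk_pos (j.+2 + i)%N.
  rewrite step; nia.
have : ~~ uniq (mkseq walk (size S).+1).
  apply/negP => /uniq_leq_size leS.
  have /leS : {subset mkseq walk (size S).+1 <= S} by move=> y /mapP[i _ ->].
  by rewrite size_mkseq ltnn.
case/(uniqPn u) => i [j [ij]]; rewrite size_mkseq => jS.
rewrite !nth_mkseq ?(ltn_trans ij) // => eij.
have := turn i (j - i).-1; rewrite prednK ?subn_gt0 // subnK ?(ltnW ij) //.
by rewrite -eij det2xx ltxx.
Qed.

End Cones.

Arguments cone_det {S u w}.
Arguments cone_meml {S u w}.
Arguments cone_memr {S u w}.
Arguments cone_empty {S u w v}.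
Arguments cone_not_straddle {S a u w}.
Arguments is_cone_next {S} HS {u}.
Arguments exists_cone {S}.
Arguments halfplane_exit {S} HS {h u}.

Definition scaleZ2 (c : int) (u : Z2) : Z2 := (c * u.1, c * u.2).
Definition addZ2 (u w : Z2) : Z2 := (u.1 + w.1, u.2 + w.2).

Lemma mapplyZ A c u : mapply A (scaleZ2 c u) = scaleZ2 c (mapply A u).
Proof. rewrite /mapply /scaleZ2 /=; congr pair; ring. Qed.

Lemma mapplyD A u w : mapply A (addZ2 u w) = addZ2 (mapply A u) (mapply A w).
Proof. rewrite /mapply /addZ2 /=; congr pair; ring. Qed.

Lemma addZ2C : commutative addZ2.
Proof. by move=> u w; rewrite /addZ2 addrC [u.2 + _]addrC. Qed.

Lemma addZ2_eq0 {u w} : addZ2 u w = (0, 0) -> w = negZ2 u.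
Proof. by case: u w => [u1 u2] [w1 w2]; rewrite /addZ2 /negZ2 /= => -[e1 e2]; congr pair; lia. Qed.

Lemma scaleZ2I {c} : c != 0 -> injective (scaleZ2 c).
Proof. by move=> cnz [u1 u2] [w1 w2] [/(mulfI cnz)-> /(mulfI cnz)->]. Qed.

Lemma det2_eq0_scale {h v} : det2 h v = 0 ->
  scaleZ2 h.1 v = scaleZ2 v.1 h /\ scaleZ2 h.2 v = scaleZ2 v.2 h.
Proof. by rewrite /det2 /scaleZ2 => /eqP; rewrite subr_eq0 => /eqP hv; split; congr pair; lia. Qed.

Section Reflection.
Variables (S : seq Z2) (A : mat2).
Hypotheses (HS : smooth_complete_fan S) (AS : forall u, u \in S -> mapply A u \in S)
  (AK : {in S, involutive (mapply A)}) (detA : det_mat2 A = -1)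
  (no_fixed_cone : forall u w, is_cone S u w ->
     mapply A w = u -> mapply A u = w -> False).

Lemma det2_mapply u w : det2 (mapply A u) (mapply A w) = - det2 u w.
Proof. by rewrite det_mapply detA mulN1r. Qed.

Lemma cone_mapply {u w} : is_cone S u w -> is_cone S (mapply A w) (mapply A u).
Proof.
move=> C; have uS := cone_meml C; have wS := cone_memr C.
apply/and4P; split; [exact: AS | exact: AS | by rewrite det2_mapply -det2C (cone_det C) |].
apply/hasPn => v vS; apply/negP => /andP[h1 h2].
apply: (cone_empty C (AS _ vS)).
  by rewrite -[u]AK // det2_mapply -det2C.
by rewrite -[w]AK // det2_mapply -det2C.
Qed.

Lemma exists_fixed_vector : exists2 h, mapply A h = h & h != (0, 0).
Proof.
have [x [y C]] := exists_cone HS.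
have fixed_sum v : v \in S -> mapply A (addZ2 v (mapply A v)) = addZ2 v (mapply A v).
  by move=> vS; rewrite mapplyD AK // addZ2C.
have [hx|hx] := eqVneq (addZ2 x (mapply A x)) (0, 0); last first.
  by exists (addZ2 x (mapply A x)); rewrite ?fixed_sum ?(cone_meml C).
have [hy|hy] := eqVneq (addZ2 y (mapply A y)) (0, 0); last first.
  by exists (addZ2 y (mapply A y)); rewrite ?fixed_sum ?(cone_memr C).
have := det2_mapply x y; rewrite (addZ2_eq0 hx) (addZ2_eq0 hy) det2Nl det2Nr opprK.
by rewrite (cone_det C) => /eqP; rewrite -subr_eq0 opprK.
Qed.

Section FixedVector.
Variable h : Z2.
Hypothesis Ah : mapply A h = h.

Lemma det2_fixed v : det2 h (mapply A v) = - det2 h v.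
Proof. by rewrite -[in LHS]Ah det2_mapply. Qed.

Lemma no_cone_crosses x y : is_cone S x y -> 0 < det2 h x -> det2 h y < 0 -> False.
Proof.
move=> C hx hy; have yS := cone_memr C; have C' := cone_mapply C.
have dxy := cone_det C; have dC' := cone_det C'.
have hAx := det2_fixed x; have hAy := det2_fixed y.
case: (ltrgtP (det2 x (mapply A y)) 0) => [neg|pos|zero].
- have : det2 x (mapply A x) <= 0.
    rewrite leNgt; apply/negP => /(cone_empty C' (cone_meml C)); apply.
    by rewrite det2C oppr_gt0.
  have := det2_plucker h (mapply A y) x (mapply A x).
  rewrite hAy hAx dC' (det2C (mapply A y) x); nia.
- have : det2 (mapply A y) y <= 0.
    by rewrite leNgt; apply/negP; apply: (cone_empty C (AS _ yS)).
  have := det2_plucker h x (mapply A y) y.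
  rewrite hAy dxy; nia.
- case: (primitive_collinear dxy dC' zero) => [Ayx|Ayx].
    by apply: (no_fixed_cone _ _ C Ayx); rewrite -Ayx AK.
  by move: hAy; rewrite Ayx det2Nr; lia.
Qed.

Hypothesis h_neq0 : h != (0, 0).

Lemma exists_ray_det2_gt0 : exists2 u, u \in S & 0 < det2 h u.
Proof.
have [x [y C]] := exists_cone HS.
have [v vS hv] : exists2 v, v \in S & det2 h v != 0.
  have [hx|] := eqVneq (det2 h x) 0; last by exists x; rewrite ?(cone_meml C).
  have [hy|] := eqVneq (det2 h y) 0; last by exists y; rewrite ?(cone_memr C).
  move: h_neq0; rewrite (det2_coord h (cone_det C)) (det2C x) hx hy oppr0.
  by rewrite !mul0r addr0.
case: (ltrgtP (det2 h v) 0) hv => // hv _; last by exists v.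
by exists (mapply A v); rewrite ?AS // det2_fixed oppr_gt0.
Qed.

Lemma collinear_fixed v : det2 h v = 0 -> mapply A v = v.
Proof.
case/det2_eq0_scale => s1 s2.
have [c cnz [w sc]] : exists2 c, c != 0 & exists w, scaleZ2 c v = scaleZ2 w h.
  have [h1|h1] := eqVneq h.1 0; last by exists h.1 => //; exists v.1.
  exists h.2; last by exists v.2.
  by apply: contraNneq h_neq0 => h2; move: h1 h2; case: (h) => /= ? ? -> ->.
by apply: (scaleZ2I cnz); rewrite -mapplyZ sc mapplyZ Ah.
Qed.

Lemma exists_cone_onto_line : exists2 x, x \in S & 0 < det2 h x /\ det2 h (next_ray S x) = 0.
Proof.
have [u uS hu] := exists_ray_det2_gt0.
have [x xS [hx hnx]] := halfplane_exit HS uS hu.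
exists x => //; split => //; apply/eqP; rewrite eq_le hnx leNgt /=.
by apply/negP; apply: no_cone_crosses (is_cone_next HS xS) hx.
Qed.

End FixedVector.

Lemma exists_fixed_opposite_rays : exists a, [/\ a \in S, negZ2 a \in S & mapply A a = a].
Proof.
have [h Ah hnz] := exists_fixed_vector.
have [x xS [hx ha]] := exists_cone_onto_line _ Ah hnz.
have Anh : mapply A (negZ2 h) = negZ2 h by rewrite mapplyN Ah.
have nhnz : negZ2 h != (0, 0).
  by apply: contraNneq hnz => /(congr1 negZ2); rewrite negZ2K => ->; rewrite /negZ2 /= oppr0.
have [y yS [hy hb]] := exists_cone_onto_line _ Anh nhnz.
move: hy hb; rewrite !det2Nl oppr_gt0 => hy /eqP; rewrite oppr_eq0 => /eqP hb.
have Cx := is_cone_next HS xS; have Cy := is_cone_next HS yS.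
set a := next_ray S x in ha Cx; set b := next_ray S y in hb Cy.
exists a; split; [exact: cone_memr Cx | | exact: (collinear_fixed _ Ah hnz)].
have dab : det2 a b = 0.
  have := det2_plucker h a b x; rewrite ha hb !mul0r subrr add0r => /eqP.
  by rewrite mulf_eq0 (gt_eqF hx) => /eqP.
have dnxa : det2 a (negZ2 x) = 1 by rewrite det2Nr det2C opprK (cone_det Cx).
case: (primitive_collinear dnxa (cone_det (is_cone_next HS (cone_memr Cy))) _) => //.
- move=> ba; move: Cy; rewrite ba => Cy.
  have := det2_plucker h x y a; rewrite ha (cone_det Cx) (cone_det Cy) mul0r.
  lia.
- by move <-; exact: cone_memr Cy.
Qed.

Lemma exists_hirzebruch_frame : exists a e (k : nat),
  [/\ [/\ a \in S, negZ2 a \in S & e \in S], det2 a e = 1, mapply A a = a &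
      mapply A e = (k%:Z * a.1 - e.1, k%:Z * a.2 - e.2)].
Proof.
have [a [aS naS Aa]] := exists_fixed_opposite_rays.
have Ca := is_cone_next HS aS; set e := next_ray S a in Ca.
have dae := cone_det Ca; have eS := cone_memr Ca.
have dAe : det2 a (mapply A e) = -1 by rewrite -{1}Aa det2_mapply dae.
have Ae : mapply A e = (det2 (mapply A e) e * a.1 - e.1, det2 (mapply A e) e * a.2 - e.2).
  by rewrite {1}(det2_coord (mapply A e) dae) dAe !mulN1r.
have [n_ge0|n_lt0] := lerP 0 (det2 (mapply A e) e).
  by exists a, e, `|det2 (mapply A e) e|%N; rewrite gez0_abs.
(* with a negative twist, the frame (-a, A e) has the opposite, positive twist *)
exists (negZ2 a), (mapply A e), `|det2 (mapply A e) e|%N; rewrite ltz0_abs //.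
split; rewrite ?negZ2K ?AS ?mapplyN ?Aa ?AK //.
  by rewrite det2Nl dAe opprK.
move: Ae; set n := det2 (mapply A e) e => ->.
by rewrite [LHS]surjective_pairing /negZ2 /=; congr pair; ring.
Qed.

End Reflection.

Arguments exists_hirzebruch_frame {S A}.

Lemma pair_mperp a u : pairZ2 (mperp a) u = det2 a u.
Proof. rewrite /pairZ2 /mperp /det2 /=; ring. Qed.

Lemma cone_split_halfplane {S a e u w} : e \in S -> det2 a e = 1 -> is_cone S u w ->
  0 <= det2 a u -> 0 <= det2 a w ->
  [/\ 0 <= det2 u e, 0 <= det2 a w & 0 <= det2 w e] \/
  [/\ 0 <= det2 e u, 0 <= det2 u (negZ2 a), 0 <= det2 e w & 0 <= det2 w (negZ2 a)].
Proof.
move=> eS dae C hu hw; have := det2_plucker a u w e.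
rewrite dae (cone_det C) mulr1 !det2Nr (det2C u a) (det2C w a) !opprK (det2C u e) (det2C w e).
case: (lerP 0 (det2 e u)) => hu'; case: (lerP 0 (det2 e w)) => hw' I.
- by right; split.
- by left; split; nia.
- case: (ltrgtP (det2 e w) 0) => hw''; [lia | | by left; split; lia].
  by exfalso; apply: (cone_empty C eS _ hw''); rewrite det2C; lia.
- by left; split; lia.
Qed.

Section HirzebruchFan.
Variables (S : seq Z2) (a e : Z2) (k : nat).
Local Notation f := (k%:Z * a.1 - e.1, k%:Z * a.2 - e.2).

Hypotheses (aS : a \in S) (naS : negZ2 a \in S) (eS : e \in S) (fS : f \in S)
  (dae : det2 a e = 1).
Local Notation F := (hirzebruch_fan e a k).

Lemma det2_twistl x : det2 f x = k%:Z * det2 a x - det2 e x.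
Proof. rewrite /det2 /=; ring. Qed.

Lemma det2_twistr x : det2 x f = k%:Z * det2 x a - det2 x e.
Proof. rewrite /det2 /=; ring. Qed.

Lemma toric_ruling_frame : toric_ruling S (mperp a) a.
Proof.
split; rewrite ?pair_mperp ?det2xx //.
- apply/eqP/coprimezP; exists (e.1, e.2).
  by move: dae; rewrite /det2 /mperp /= => <-; ring.
- by move=> u w C; rewrite !pair_mperp; apply: cone_not_straddle C.
Qed.

Let det2E := (det2xx, det2Nl, det2Nr, det2_twistl, det2_twistr, dae, det2C e a, @opprK int).

Lemma is_cone_hirzebruch :
  [/\ is_cone F a e, is_cone F e (negZ2 a), is_cone F (negZ2 a) f & is_cone F f a].
Proof.
split; apply/and4P; split; rewrite ?inE ?eqxx ?orbT ?det2E //; try (apply/eqP; lia).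
all: apply/hasPn => v; rewrite !inE => /or4P[]/eqP->; rewrite ?det2E.
all: try (apply/negP => /andP[]; lia).
Qed.

Lemma smooth_complete_hirzebruch : smooth_complete_fan F.
Proof.
have [Cae Cen Cnf Cfa] := is_cone_hirzebruch.
split => //; last by move=> u; rewrite !inE => /or4P[]/eqP->; eexists; eassumption.
have neq z x y : det2 z x != det2 z y -> x != y by apply: contraNneq => ->.
rewrite /hirzebruch_fan /= !inE !negb_or !andbT.
by repeat (apply/andP; split); first
  [apply: (neq a); rewrite ?det2E; apply/eqP; lia | apply: (neq e); rewrite ?det2E; apply/eqP; lia].
Qed.

Lemma subdivides_hirzebruch : subdivides S F.
Proof.
have [Cae Cen Cnf Cfa] := is_cone_hirzebruch.
split; first exact: smooth_complete_hirzebruch.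
move=> u w C; have := cone_not_straddle aS naS C => huw.
have [[hu hw]|[hu hw]] :
    (0 <= det2 a u /\ 0 <= det2 a w) \/ (det2 a u <= 0 /\ det2 a w <= 0) by nia.
  case: (cone_split_halfplane eS dae C hu hw) => [[h1 h2 h3]|[h1 h2 h3 h4]].
    by exists a, e.
  by exists e, (negZ2 a).
have dnf : det2 (negZ2 a) f = 1 by rewrite ?det2E; lia.
have hu' : 0 <= det2 (negZ2 a) u by rewrite det2Nl oppr_ge0.
have hw' : 0 <= det2 (negZ2 a) w by rewrite det2Nl oppr_ge0.
case: (cone_split_halfplane fS dnf C hu' hw') => [[h1 h2 h3]|[h1 h2 h3 h4]].
  by exists (negZ2 a), f.
by rewrite negZ2K in h2 h4; exists f, a.
Qed.

Lemma hirzebruch_fan_invariant A : mapply A a = a -> mapply A e = f -> mapply A f = e ->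
  forall u, u \in F -> mapply A u \in F.
Proof.
by move=> Aa Ae Af u; rewrite !inE => /or4P[]/eqP->; rewrite ?mapplyN ?Aa ?Ae ?Af eqxx ?orbT.
Qed.

End HirzebruchFan.

Arguments toric_ruling_frame {S a e}.
Arguments subdivides_hirzebruch {S a e k}.
Arguments hirzebruch_fan_invariant {a e k}.

Definition mapply_dual (A : mat2) (m : Z2) : Z2 :=
  (m.1 * a11 A + m.2 * a21 A, m.1 * a12 A + m.2 * a22 A).

Lemma mperp_neg u : mperp (negZ2 u) = negZ2 (mperp u).
Proof. by []. Qed.

Lemma pair_mapply_dual A m u : pairZ2 (mapply_dual A m) u = pairZ2 m (mapply A u).
Proof. rewrite /pairZ2 /mapply_dual /mapply /=; ring. Qed.

Lemma pairZ2_frame {a e} m : det2 a e = 1 ->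
  m = addZ2 (scaleZ2 (pairZ2 m a) (e.2, - e.1)) (scaleZ2 (pairZ2 m e) (mperp a)).
Proof.
case: m => m1 m2; rewrite /addZ2 /scaleZ2 /pairZ2 /mperp /det2 /= => dae.
by congr pair; rewrite -[LHS]mulr1 -dae; ring.
Qed.

Lemma pairZ2_frame_inj {a e m m'} : det2 a e = 1 ->
  pairZ2 m a = pairZ2 m' a -> pairZ2 m e = pairZ2 m' e -> m = m'.
Proof. by move=> dae ha he; rewrite (pairZ2_frame m dae) (pairZ2_frame m' dae) ha he. Qed.

Lemma mulVf_eq_sqr {F : fieldType} {c : F} (s : F) : c != 0 -> (c^-1 * s == c) = (c ^+ 2 == s).
Proof. by move=> cnz; rewrite -(inj_eq (mulfI cnz)) mulVKf // eq_sym expr2. Qed.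

Lemma mulVf_eq_sqrV {F : fieldType} {c : F} (s : F) : c != 0 ->
  (c^-1 * s^-1 == c) = (c^-1 ^+ 2 == s).
Proof.
move=> cnz; rewrite -(mulVf_eq_sqr s (invr_neq0 cnz)) invrK -invfM.
by rewrite (can2_eq invrK invrK).
Qed.

Section Characters.
Variable R : realType.
Local Notation C := R[i].
Implicit Types x y : C.

Lemma chr_neq0 x y m : x != 0 -> y != 0 -> chr x y m != 0.
Proof. by move=> xnz ynz; rewrite mulf_neq0 // expfz_neq0. Qed.

Lemma chrD x y m m' : x != 0 -> y != 0 -> chr x y (addZ2 m m') = chr x y m * chr x y m'.
Proof. by move=> xnz ynz; rewrite /chr /= !expfzDr // mulrACA. Qed.

Lemma chrZ x y c m : chr x y (scaleZ2 c m) = chr x y m ^ c.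
Proof. by rewrite /chr /= expfzMl !exprz_exp ![c * _]mulrC. Qed.

Lemma chrN x y m : chr x y (negZ2 m) = (chr x y m)^-1.
Proof.
have -> : negZ2 m = scaleZ2 (-1) m by rewrite /negZ2 /scaleZ2 !mulN1r.
by rewrite chrZ exprN1.
Qed.

Lemma chrM x y x' y' m : chr (x * x') (y * y') m = chr x y m * chr x' y' m.
Proof. by rewrite /chr !expfzMl mulrACA. Qed.

Lemma chr1 m : chr (1 : C) 1 m = 1.
Proof. by rewrite /chr !exp1rz mulr1. Qed.

Lemma chr10 x y : chr x y (1, 0) = x.
Proof. by rewrite /chr /= expr1z expr0z mulr1. Qed.

Lemma chr01 x y : chr x y (0, 1) = y.
Proof. by rewrite /chr /= expr1z expr0z mul1r. Qed.

Lemma chr_chr x y u w m : x != 0 -> y != 0 ->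
  chr (chr x y u) (chr x y w) m = chr x y (m.1 * u.1 + m.2 * w.1, m.1 * u.2 + m.2 * w.2).
Proof.
move=> xnz ynz.
by rewrite -[(_, _) in RHS]/(addZ2 (scaleZ2 m.1 u) (scaleZ2 m.2 w)) chrD // !chrZ.
Qed.

End Characters.

Section TorusAction.
Variables (R : realType) (S : seq Z2) (A : mat2) (t1 t2 : R[i]) (a e : Z2) (k : nat).
Local Notation C := R[i].
Implicit Types (x y c : C) (q : vpoint R).
Local Notation f := (k%:Z * a.1 - e.1, k%:Z * a.2 - e.2).
(* (astar, p) is the basis of M dual to the frame (a, e) of N *)
Local Notation astar := ((e.2, - e.1) : Z2).
Local Notation p := (mperp a).
Local Notation iota := (vact A t1 t2).
Local Notation s := (chr t1 t2 p).
Local Notation tau := (chr t1 t2 astar).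

Hypotheses (HS : smooth_complete_fan S) (detA : det_mat2 A = -1)
  (t1nz : t1 != 0) (t2nz : t2 != 0)
  (iotaK : forall q, vvalid S q -> iota (iota q) = q)
  (no_fixed_vertex : forall u w, is_cone S u w -> iota (VFix R u w) <> VFix R u w)
  (aS : a \in S) (naS : negZ2 a \in S) (eS : e \in S) (fS : f \in S)
  (dae : det2 a e = 1) (Aa : mapply A a = a) (Ae : mapply A e = f).

Lemma mapply_dual_p : mapply_dual A p = negZ2 p.
Proof.
apply: (pairZ2_frame_inj dae); rewrite !pair_mapply_dual ?Aa ?Ae /pairZ2 /=.
all: move: dae; rewrite /det2 /mperp /=; lia.
Qed.

Lemma mapply_dual_astar : mapply_dual A astar = addZ2 astar (scaleZ2 k p).
Proof.
apply: (pairZ2_frame_inj dae); rewrite !pair_mapply_dual ?Aa ?Ae /pairZ2 /=.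
all: move: dae; rewrite /det2 /mperp /=; nia.
Qed.

Lemma s_neq0 : s != 0.
Proof. exact: chr_neq0. Qed.

Lemma chr_frame {x y} m : x != 0 -> y != 0 ->
  chr x y m = chr x y astar ^ pairZ2 m a * chr x y p ^ pairZ2 m e.
Proof. by move=> xnz ynz; rewrite {1}(pairZ2_frame m dae) chrD // !chrZ. Qed.

Lemma torus_point_eq x y x' y' : x != 0 -> y != 0 -> x' != 0 -> y' != 0 ->
  chr x y astar = chr x' y' astar -> chr x y p = chr x' y' p -> VTor x y = VTor x' y'.
Proof.
move=> xnz ynz x'nz y'nz eX eY.
have coord m : chr x y m = chr x' y' m.
  by rewrite (chr_frame m xnz ynz) (chr_frame m x'nz y'nz) eX eY.
by have := coord (1, 0); have := coord (0, 1); rewrite !chr10 !chr01 => -> ->.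
Qed.

Lemma vact_torus {x y} : x != 0 -> y != 0 -> exists x' y',
  [/\ iota (VTor x y) = VTor x' y', x' != 0, y' != 0,
      chr x' y' astar = tau * (chr x y astar * chr x y p ^+ k) &
      chr x' y' p = s * (chr x y p)^-1].
Proof.
move=> xnz ynz; eexists; eexists; split; first by [].
- by rewrite mulf_neq0 ?chr_neq0.
- by rewrite mulf_neq0 ?chr_neq0.
- rewrite chrM chr_chr // -/(mapply_dual A astar) mapply_dual_astar.
  by rewrite chrD // chrZ exprnP.
- by rewrite chrM chr_chr // -/(mapply_dual A p) mapply_dual_p chrN.
Qed.

Lemma twist_relation : tau ^+ 2 * s ^+ k = 1.
Proof.
have h1 : (1 : C) != 0 := oner_neq0 _.
have [x [y [E1 xnz ynz X1 Y1]]] := vact_torus h1 h1.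
have [x' [y' [E2 _ _ X2 Y2]]] := vact_torus xnz ynz.
move: (iotaK (VTor 1 1) (conj h1 h1)) X2; rewrite E1 E2 => -[-> ->].
by rewrite X1 Y1 !chr1 expr1n invr1 !mulr1 mulrA -expr2 => <-.
Qed.

Lemma fixed_torus_pointP {x y} : x != 0 -> y != 0 ->
  iota (VTor x y) = VTor x y <-> chr x y p ^+ 2 = s /\ tau * chr x y p ^+ k = 1.
Proof.
move=> xnz ynz; have [x' [y' [-> x'nz y'nz X' Y']]] := vact_torus xnz ynz.
have Xnz : chr x y astar != 0 by apply: chr_neq0.
have Ynz : chr x y p != 0 by apply: chr_neq0.
have twistE : (tau * (chr x y astar * chr x y p ^+ k) == chr x y astar) =
              (tau * chr x y p ^+ k == 1).
  by rewrite mulrCA -{2}[chr x y astar]mulr1 (inj_eq (mulfI Xnz)).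
split => [[Ex Ey]|[Y2 Yk]]; first (rewrite Ex Ey in X' Y'; split; apply/eqP).
- by rewrite -(mulVf_eq_sqr s Ynz) mulrC {2}Y'.
- by rewrite -twistE {2}X'.
apply: torus_point_eq; rewrite // ?X' ?Y'; apply/eqP.
  by rewrite twistE Yk.
by rewrite mulrC (mulVf_eq_sqr _ Ynz) Y2.
Qed.

Lemma vact_ray u c :
  iota (VRay u c) = VRay (mapply A u) (c^-1 * chr t1 t2 (mperp (mapply A u))).
Proof. by rewrite /= detA exprN1. Qed.

Lemma ray_cases {u} : u \in S -> [\/ u = a, u = negZ2 a | det2 a u != 0].
Proof.
move=> uS; have [dau|] := eqVneq (det2 a u) 0; last by constructor 3.
by case: (primitive_collinear dae (cone_det (is_cone_next HS uS)) dau) => ->;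
  [constructor 1 | constructor 2].
Qed.

Lemma mperp_neq : (p == mperp (negZ2 a)) = false.
Proof.
apply/negP => /eqP /(congr1 (pairZ2^~ e)).
by rewrite !pair_mperp det2Nl dae => /eqP; rewrite -subr_eq0 opprK.
Qed.

Lemma vproj_ray_a c : vproj p (VRay a c) = P1Tor c.
Proof. by rewrite /vproj pair_mperp det2xx !eqxx expr1z. Qed.

Lemma vproj_ray_na c : vproj p (VRay (negZ2 a) c) = P1Tor c^-1.
Proof. by rewrite /vproj pair_mperp det2Nr det2xx oppr0 eqxx mperp_neq exprN1. Qed.

Lemma vproj_ray_off u c : det2 a u != 0 ->
  vproj p (VRay u c) = if 0 < det2 a u then P1Pos R else P1Neg R.
Proof. by move=> dau; rewrite /vproj pair_mperp (negPf dau). Qed.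

Lemma det2_mapply_fixed u : det2 a (mapply A u) = - det2 a u.
Proof. by rewrite -{1}Aa det_mapply detA mulN1r. Qed.

Lemma vproj_vact q : vvalid S q -> vproj p (iota q) = p1act false s (vproj p q).
Proof.
case: q => [x y [xnz ynz] | u c [uS cnz] | u w C].
- have [x' [y' [-> _ _ _ Y']]] := vact_torus xnz ynz.
  by rewrite /= Y'.
- rewrite vact_ray; case: (ray_cases uS) => [->|->|dau].
  + by rewrite Aa !vproj_ray_a /= mulrC.
  + rewrite mapplyN Aa !vproj_ray_na /= mperp_neg chrN.
    by rewrite invfM !invrK mulrC.
  + rewrite !vproj_ray_off ?det2_mapply_fixed ?oppr_eq0 // oppr_gt0.
    by case: (ltrgtP (det2 a u) 0) dau.
- have sum_neq0 : det2 a u + det2 a w != 0.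
    have := cone_not_straddle aS naS C; have := det2_plucker a u w e.
    by rewrite dae (cone_det C) mulr1 => ? ?; apply/eqP => ?; nia.
  rewrite /= detA /= !pair_mperp !det2_mapply_fixed.
  by case: (ltrgtP (det2 a u + det2 a w) 0) sum_neq0 => // sgn _; case: ifP => //= h;
    exfalso; lia.
Qed.

Definition is_fixed q := vvalid S q /\ iota q = q.

Lemma fixed_pointP q : is_fixed q <-> exists z,
  [/\ in_fiber S p (P1Tor z) q, z ^+ 2 = s & forall x y, q = VTor x y -> tau * z ^+ k = 1].
Proof.
case: q => [x y | u c | u w]; split.
- case=> -[xnz ynz] /(fixed_torus_pointP xnz ynz) [Y2 Yk].
  by exists (chr x y p); split => // _ _ [-> ->].
- case=> z [[[xnz ynz] /= [<-]] Y2 Yk]; split => //.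
  exact/(fixed_torus_pointP xnz ynz)/(conj Y2 (Yk _ _ erefl)).
- case=> -[uS cnz]; rewrite vact_ray => -[Au].
  case: (ray_cases uS) => [ua|ua|dau].
  + rewrite ua Aa => /eqP; rewrite (mulVf_eq_sqr _ cnz) => /eqP c2.
    by exists c; split => //; split; [split | rewrite vproj_ray_a].
  + rewrite ua mapplyN Aa mperp_neg chrN => /eqP; rewrite (mulVf_eq_sqrV _ cnz) => /eqP c2.
    by exists c^-1; split => //; split; [split | rewrite vproj_ray_na].
  + by have := det2_mapply_fixed u; rewrite Au; move: dau; lia.
- case=> z [[[uS cnz] pz] z2 _]; split => //; rewrite vact_ray.
  case: (ray_cases uS) pz => [->|->|dau].
  + rewrite vproj_ray_a Aa => -[cz]; subst z; congr VRay.
    by apply/eqP; rewrite (mulVf_eq_sqr _ cnz) z2.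
  + rewrite vproj_ray_na mapplyN Aa mperp_neg chrN => -[cz]; subst z; congr VRay.
    by apply/eqP; rewrite (mulVf_eq_sqrV _ cnz) z2.
  + by rewrite vproj_ray_off //; case: ifP.
- by case=> C /(no_fixed_vertex _ _ C).
- by case=> z [[_ /=]]; case: ifP.
Qed.

Lemma torus_point_over {z : C} : z != 0 -> exists x y, in_fiber S p (P1Tor z) (VTor x y).
Proof.
move=> znz; have h1 : (1 : C) != 0 := oner_neq0 _.
exists (chr 1 z (a.1, e.1)), (chr 1 z (a.2, e.2)); split; first by split; apply: chr_neq0.
rewrite /= chr_chr //; congr P1Tor; rewrite -[RHS](@chr01 R 1 z); congr chr.
by move: dae; rewrite /det2 /mperp /= => d; congr pair; [ring | rewrite -d; ring].
Qed.

Lemma boundary_fiberP {z : C} {q} : z != 0 -> (forall x y, q <> VTor x y) ->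
  in_fiber S p (P1Tor z) q <-> q = VRay a z \/ q = VRay (negZ2 a) z^-1.
Proof.
move=> znz; case: q => [x y /(_ x y erefl) // | u c _ | u w _]; split.
- case=> -[uS cnz]; case: (ray_cases uS) => [->|->|dau].
  + by rewrite vproj_ray_a => -[->]; left.
  + by rewrite vproj_ray_na => -[<-]; right; rewrite invrK.
  + by rewrite vproj_ray_off //; case: ifP.
- case=> -[-> ->]; split; rewrite ?vproj_ray_a ?vproj_ray_na ?invrK //.
  by split; rewrite // invr_eq0.
- by case=> _ /=; case: ifP.
- by case.
Qed.

Lemma fixed_point_over_torus q : is_fixed q -> exists z, vproj p q = P1Tor z.
Proof. by case/fixed_pointP => z [[_ pq] _ _]; exists z. Qed.

Lemma fixed_fiberP z : p1valid z ->
  (forall q, in_fiber S p z q -> is_fixed q) <->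
  exists2 c, z = P1Tor c & c ^+ 2 = s /\ tau * c ^+ k = 1.
Proof.
case: z => [c cnz | _ | _]; split.
- move=> fixed_fiber; exists c => //.
  have [x [y [vxy pxy]]] := torus_point_over cnz.
  have /fixed_pointP [z [[_ pz] z2 zk]] := fixed_fiber _ (conj vxy pxy).
  by move: pz; rewrite pxy => -[->]; split => //; apply: zk.
- case=> _ [<-] [c2 ck] q fq; apply/fixed_pointP.
  by exists c; split => // x y _.
- move=> fixed_fiber; exfalso.
  have /fixed_point_over_torus [z] : is_fixed (VRay e 1).
    apply: fixed_fiber; split; first by split; rewrite ?oner_neq0.
    by rewrite vproj_ray_off dae ?ltr01 ?oner_neq0.
  by rewrite vproj_ray_off dae.
- by case.
- move=> fixed_fiber; exfalso.
  have dfa : det2 a f = -1 by rewrite det2_twistr det2xx mulr0 sub0r dae.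
  have /fixed_point_over_torus [z] : is_fixed (VRay f 1).
    apply: fixed_fiber; split; first by split; rewrite ?oner_neq0.
    by rewrite vproj_ray_off dfa ?oppr_eq0 ?oner_neq0.
  by rewrite vproj_ray_off dfa.
- by case.
Qed.

Lemma root_neq0 {c} : c ^+ 2 = s -> c != 0.
Proof. by move=> c2; apply: contra_eq_neq c2 => ->; rewrite expr0n eq_sym s_neq0. Qed.

Definition case_E0 := exists a1 a2 b1 b2 : vpoint R,
  [/\ a1 <> a2, b1 <> b2, on_divisor S a a1 /\ on_divisor S a a2,
      on_divisor S (negZ2 a) b1 /\ on_divisor S (negZ2 a) b2 &
      forall q, is_fixed q <-> (q = a1 \/ q = a2 \/ q = b1 \/ q = b2)].

Definition case_E1 := exists (z : p1point R) (q1 q2 : vpoint R),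
  [/\ p1valid z, on_divisor S a q1 /\ on_divisor S (negZ2 a) q2,
      ~ in_fiber S p z q1 /\ ~ in_fiber S p z q2 &
      forall q, is_fixed q <-> (in_fiber S p z q \/ q = q1 \/ q = q2)].

Definition case_E2 := exists (z1 z2 : p1point R),
  [/\ p1valid z1, p1valid z2, z1 <> z2 &
      forall q, is_fixed q <-> (in_fiber S p z1 q \/ in_fiber S p z2 q)].

Lemma fixed_torus_point_not_E0 x y : is_fixed (VTor x y) -> ~ case_E0.
Proof.
move=> fxy [a1 [a2 [b1 [b2 [_ _ [Da1 Da2] [Db1 Db2] fixedE]]]]].
by case/fixedE: fxy => [E|[E|[E|E]]]; [case: Da1 | case: Da2 | case: Db1 | case: Db2];
  rewrite -E.
Qed.

Lemma E1_fixed_fiber : case_E1 -> exists2 z, p1valid z &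
  (forall q, in_fiber S p z q -> is_fixed q) /\
  (forall x y, is_fixed (VTor x y) -> in_fiber S p z (VTor x y)).
Proof.
case=> z [q1 [q2 [zv [D1 D2] _ fixedE]]]; exists z => //; split.
  by move=> q zq; apply/fixedE; left.
move=> x y /fixedE [//|[E|E]]; [case: D1 | case: D2]; by rewrite -E.
Qed.

Lemma E2_fixed_fibers : case_E2 -> exists z1 z2, [/\ p1valid z1, p1valid z2, z1 <> z2,
  forall q, in_fiber S p z1 q -> is_fixed q & forall q, in_fiber S p z2 q -> is_fixed q].
Proof.
case=> z1 [z2 [z1v z2v z12 fixedE]]; exists z1, z2; split => // q zq.
  by apply/fixedE; left.
by apply/fixedE; right.
Qed.

Lemma no_fixed_torus_point_not_E1_E2 :
  (forall x y, ~ is_fixed (VTor x y)) -> ~ case_E1 /\ ~ case_E2.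
Proof.
have fiber_torus (z : p1point R) : p1valid z -> (forall q, in_fiber S p z q -> is_fixed q) ->
    exists x y, is_fixed (VTor x y).
  move=> zv /(fixed_fiberP _ zv) [c _ [c2 ck]].
  have [x [y Fxy]] := torus_point_over (root_neq0 c2).
  by exists x, y; apply: ((fixed_fiberP (P1Tor c) (root_neq0 c2)).2 _ _ Fxy); exists c.
move=> nofix; split.
  by case/E1_fixed_fiber => z zv [/(fiber_torus _ zv) [x [y /nofix]]].
by case/E2_fixed_fibers => z1 [z2 [z1v _ _ /(fiber_torus _ z1v) [x [y /nofix]]]].
Qed.

Lemma torus_or_boundary q : (exists x y, q = VTor x y) \/ (forall x y, q <> VTor x y).
Proof. by case: q => [x y | u c | u w]; [left; exists x, y | right..]. Qed.

Lemma fixed_boundaryP {q} : (forall x y, q <> VTor x y) ->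
  is_fixed q <-> exists2 z, z ^+ 2 = s & q = VRay a z \/ q = VRay (negZ2 a) z^-1.
Proof.
move=> qnt; split.
  case/fixed_pointP => z [qz z2 _]; exists z => //.
  exact/(boundary_fiberP (root_neq0 z2) qnt).
case=> z z2 qz; apply/fixed_pointP; exists z; split => // [|x y /qnt //].
exact/(boundary_fiberP (root_neq0 z2) qnt).
Qed.

Lemma twist_opp c : tau * (- c) ^+ k = (-1) ^+ k * (tau * c ^+ k).
Proof. by rewrite [in LHS]exprNn mulrCA. Qed.

Lemma exists_twisted_root : exists2 r, r ^+ 2 = s &
  [\/ ~~ odd k /\ tau * r ^+ k = 1, ~~ odd k /\ tau * r ^+ k = -1 | odd k /\ tau * r ^+ k = 1].
Proof.
have r2 := sqrtCK s.
have : (tau * sqrtC s ^+ k) ^+ 2 = 1 by rewrite exprMn -exprM mulnC exprM r2 twist_relation.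
move/eqP; rewrite sqrf_eq1 => /orP[]/eqP rk; case: (boolP (odd k)) => ok.
- by exists (sqrtC s) => //; constructor 3.
- by exists (sqrtC s) => //; constructor 1.
- exists (- sqrtC s); rewrite ?sqrrN //; constructor 3; split => //.
  by rewrite twist_opp rk -signr_odd ok expr1 mulrN1 opprK.
- by exists (sqrtC s) => //; constructor 2.
Qed.

Section SquareRoot.
Variable r : C.
Hypothesis r2 : r ^+ 2 = s.

Lemma square_rootsP c : c ^+ 2 = s <-> c = r \/ c = - r.
Proof.
rewrite -r2; split => [/eqP|[]->]; rewrite ?sqrrN // eqf_sqr.
by case/orP => /eqP; [left | right].
Qed.

Lemma opp_root_neq : r != - r.
Proof. by rewrite eq_sym eqNr root_neq0. Qed.

Lemma fixed_fiber_root {c} : c = r \/ c = - r -> tau * c ^+ k = 1 ->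
  forall q, in_fiber S p (P1Tor c) q -> is_fixed q.
Proof.
move=> /square_rootsP c2 ck; apply/(fixed_fiberP (P1Tor c) (root_neq0 c2)).
by exists c.
Qed.

Lemma fixed_torus_over_root {c} : c = r \/ c = - r -> tau * c ^+ k = 1 ->
  exists x y, is_fixed (VTor x y) /\ vproj p (VTor x y) = P1Tor c.
Proof.
move=> cr ck; have [x' [y' [vxy pxy]]] := torus_point_over (root_neq0 (proj2 (square_rootsP c) cr)).
by exists x', y'; split => //; apply: fixed_fiber_root cr ck _ _.
Qed.

Lemma fixed_locus_even_fibers : ~~ odd k -> tau * r ^+ k = 1 -> [/\ ~ case_E0, ~ case_E1 & case_E2].
Proof.
move=> ek rk; have rk' : tau * (- r) ^+ k = 1.
  by rewrite twist_opp -signr_odd (negPf ek) mul1r.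
have [x [y [fxy pxy]]] := fixed_torus_over_root (or_introl erefl) rk.
have [x' [y' [fxy' pxy']]] := fixed_torus_over_root (or_intror erefl) rk'.
split; first exact: fixed_torus_point_not_E0 fxy.
  case/E1_fixed_fiber => z _ [_ /(_ _ _) in_z].
  have [[_ pz] [_ pz']] := (in_z _ _ fxy, in_z _ _ fxy').
  by move: pz'; rewrite -pz pxy pxy' => -[/eqP]; rewrite eq_sym (negPf opp_root_neq).
exists (P1Tor r), (P1Tor (- r)); split.
- exact: root_neq0 r2.
- by rewrite /= oppr_eq0 (root_neq0 r2).
- by case=> /eqP; rewrite (negPf opp_root_neq).
move=> q; split.
  case/fixed_pointP => z [qz /square_rootsP [] zr _]; rewrite -zr; tauto.
by case; [apply: (fixed_fiber_root (or_introl erefl) rk) |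
          apply: (fixed_fiber_root (or_intror erefl) rk')].
Qed.

Lemma on_section_points :
  [/\ on_divisor S a (VRay a r), on_divisor S a (VRay a (- r)),
      on_divisor S (negZ2 a) (VRay (negZ2 a) r^-1) &
      on_divisor S (negZ2 a) (VRay (negZ2 a) (- r)^-1)].
Proof. by have rnz := root_neq0 r2; split; split; rewrite //= ?invr_eq0 ?oppr_eq0. Qed.

Lemma fixed_locus_even_points : ~~ odd k -> tau * r ^+ k = -1 ->
  [/\ case_E0, ~ case_E1 & ~ case_E2].
Proof.
move=> ek rk; have rk' : tau * (- r) ^+ k = -1.
  by rewrite twist_opp -signr_odd (negPf ek) mul1r.
have nofix x y : ~ is_fixed (VTor x y).
  by case/fixed_pointP => z [_ /square_rootsP [] -> /(_ x y erefl)];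
    rewrite ?rk ?rk' => /eqP; rewrite eqNr oner_eq0.
have [nE1 nE2] := no_fixed_torus_point_not_E1_E2 nofix.
split => //; have [Da1 Da2 Db1 Db2] := on_section_points.
exists (VRay a r), (VRay a (- r)), (VRay (negZ2 a) r^-1), (VRay (negZ2 a) (- r)^-1).
split => //.
- by case=> /eqP; rewrite (negPf opp_root_neq).
- by case=> /invr_inj /eqP; rewrite (negPf opp_root_neq).
move=> q; case: (torus_or_boundary q) => [[x [y ->]]|qnt].
  by split => [/nofix|] //; case=> [|[|[|]]].
rewrite (fixed_boundaryP qnt); split.
  by case=> z /square_rootsP [] -> [] ->; tauto.
by case=> [|[|[|]]] ->; [exists r | exists (- r) | exists r | exists (- r)];
  rewrite ?sqrrN //; tauto.
Qed.

Lemma fixed_locus_odd : odd k -> tau * r ^+ k = 1 -> [/\ ~ case_E0, case_E1 & ~ case_E2].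
Proof.
move=> ok rk; have rk' : tau * (- r) ^+ k = -1.
  by rewrite twist_opp -signr_odd ok expr1 rk mulr1.
have m1_neq1 : (-1 : C) != 1 by rewrite eqNr oner_eq0.
have fixed_root c : c ^+ 2 = s -> tau * c ^+ k = 1 -> c = r.
  by case/square_rootsP => -> //; rewrite rk' => /eqP; rewrite (negPf m1_neq1).
have [x [y [fxy pxy]]] := fixed_torus_over_root (or_introl erefl) rk.
split; first exact: fixed_torus_point_not_E0 fxy.
  have [_ Da2 _ Db2] := on_section_points.
  exists (P1Tor r), (VRay a (- r)), (VRay (negZ2 a) (- r)^-1); split => //.
  - exact: root_neq0 r2.
  - by split; case=> _; rewrite ?vproj_ray_a ?vproj_ray_na ?invrK => -[] /eqP;
      rewrite eqNr (negPf (root_neq0 r2)).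
  move=> q; case: (torus_or_boundary q) => [[x' [y' ->]]|qnt].
    split => [/fixed_pointP [z [qz z2 /(_ x' y' erefl) zk]]|].
      by left; rewrite -(fixed_root z).
    by case=> [|[|]] //; apply: (fixed_fiber_root (or_introl erefl) rk).
  rewrite (fixed_boundaryP qnt); split.
    case=> z /square_rootsP [] -> qz; last by right.
    by left; apply/(boundary_fiberP (root_neq0 r2) qnt); tauto.
  case=> [/(boundary_fiberP (root_neq0 r2) qnt) qr|[->|->]]; [exists r | exists (- r) ..];
    rewrite ?sqrrN //; tauto.
case/E2_fixed_fibers => z1 [z2 [z1v z2v z12 /(fixed_fiberP _ z1v) [c1 z1E [c12 c1k]]]].
move=> /(fixed_fiberP _ z2v) [c2 z2E [c22 c2k]]; apply: z12.
by rewrite z1E z2E (fixed_root c1) // (fixed_root c2).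
Qed.

End SquareRoot.

Lemma fixed_locus_classification :
  [\/ [/\ case_E0, ~ case_E1 & ~ case_E2], [/\ ~ case_E0, case_E1 & ~ case_E2]
    | [/\ ~ case_E0, ~ case_E1 & case_E2]] /\
  (case_E0 \/ case_E2 -> ~~ odd k) /\ (case_E1 -> odd k).
Proof.
have [r r2 [[ek rk]|[ek rk]|[ok rk]]] := exists_twisted_root.
- have [nE0 nE1 E2] := fixed_locus_even_fibers _ r2 ek rk.
  by split; [constructor 3 | split => // /nE1].
- have [E0 nE1 nE2] := fixed_locus_even_points _ r2 ek rk.
  by split; [constructor 1 | split => // /nE1].
- have [nE0 E1 nE2] := fixed_locus_odd _ r2 ok rk.
  by split; [constructor 2 | split => // [[/nE0|/nE2]]].
Qed.

Lemma base_involution : exists (eps : bool) (s0 : C),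
  [/\ s0 != 0, forall z, p1valid z -> p1act eps s0 (p1act eps s0 z) = z,
      exists z, p1valid z /\ p1act eps s0 z <> z &
      forall q, vvalid S q -> vproj p (iota q) = p1act eps s0 (vproj p q)].
Proof.
exists false, s; split.
- exact: s_neq0.
- by case=> [c cnz | |] //=; rewrite invfM invrK mulVKf ?s_neq0.
- by exists (P1Pos R).
- exact: vproj_vact.
Qed.

End TorusAction.

Arguments fixed_locus_classification {R S A t1 t2 a e k}.
Arguments base_involution {R S A t1 t2 a e k}.

Theorem lemma7p2 (R : realType) (S : seq Z2) (A : mat2) (t1 t2 : R[i]) :
  smooth_complete_fan S ->
  (* iota = t . A_* is a well-defined automorphism of (V,D) *)
  (forall u, u \in S -> mapply A u \in S) ->
  t1 != 0 -> t2 != 0 ->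
  (* iota is an involution of V *)
  (forall q, vvalid S q -> vact A t1 t2 (vact A t1 t2 q) = q) ->
  (* nonsymplectic *)
  det_mat2 A = -1 ->
  (* no torus-fixed point of V is fixed by iota *)
  (forall u w, is_cone S u w -> vact A t1 t2 (VFix R u w) <> VFix R u w) ->
  exists (p v : Z2),
    toric_ruling S p v /\
    (* pi commutes with a nontrivial involution of the base P^1 *)
    (exists (eps : bool) (s : R[i]),
        [/\ s != 0,
            forall z, p1valid z -> p1act eps s (p1act eps s z) = z,
            exists z, p1valid z /\ p1act eps s z <> z &
            forall q, vvalid S q -> vproj p (vact A t1 t2 q) = p1act eps s (vproj p q)]) /\
    let fixed q := vvalid S q /\ vact A t1 t2 q = q in
    let s1 := on_divisor S v in
    let s2 := on_divisor S (negZ2 v) in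
    let E0 := exists a1 a2 b1 b2 : vpoint R,
        [/\ a1 <> a2, b1 <> b2, s1 a1 /\ s1 a2, s2 b1 /\ s2 b2 &
            forall q, fixed q <-> (q = a1 \/ q = a2 \/ q = b1 \/ q = b2)] in
    let E1 := exists (z : p1point R) (q1 q2 : vpoint R),
        [/\ p1valid z, s1 q1 /\ s2 q2,
            ~ in_fiber S p z q1 /\ ~ in_fiber S p z q2 &
            forall q, fixed q <-> (in_fiber S p z q \/ q = q1 \/ q = q2)] in
    let E2 := exists (z1 z2 : p1point R),
        [/\ p1valid z1, p1valid z2, z1 <> z2 &
            forall q, fixed q <-> (in_fiber S p z1 q \/ in_fiber S p z2 q)] in
    [\/ [/\ E0, ~ E1 & ~ E2], [/\ ~ E0, E1 & ~ E2] | [/\ ~ E0, ~ E1 & E2]] /\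
    (* the fan is an iota-invariant subdivision of the fan of F_n (whose
       ruling is pi, i.e. f = v), with the parity of n as stated *)
    exists (e : Z2) (n : nat),
      [/\ det2 e v = 1 \/ det2 e v = -1,
          subdivides S (hirzebruch_fan e v n),
          (forall u, u \in hirzebruch_fan e v n -> mapply A u \in hirzebruch_fan e v n),
          (E0 \/ E2 -> ~~ odd n) & (E1 -> odd n)].
Proof.
move=> HS AS t1nz t2nz iotaK detA no_fixed_vertex.
have AK : {in S, involutive (mapply A)}.
  by move=> u uS; case: (iotaK (VRay u 1) (conj uS (oner_neq0 _))).
have no_fixed_cone u w : is_cone S u w -> mapply A w = u -> mapply A u = w -> False.
  by move=> C Awu Auw; apply: (no_fixed_vertex u w C); rewrite /= detA /= Awu Auw.
have [a [e [k [[aS naS eS] dae Aa Ae]]]] :=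
  exists_hirzebruch_frame HS AS AK detA no_fixed_cone.
have fS : (k%:Z * a.1 - e.1, k%:Z * a.2 - e.2) \in S by rewrite -Ae AS.
have [classification [parity_E0_E2 parity_E1]] := fixed_locus_classification (k := k)
  HS detA t1nz t2nz iotaK no_fixed_vertex aS naS eS fS dae Aa Ae.
exists (mperp a), a; split; first exact: toric_ruling_frame aS naS dae.
split; first exact: (base_involution (k := k) HS detA t1nz t2nz aS naS eS fS dae Aa Ae).
split; first exact: classification.
exists e, k; split => //; first by right; rewrite det2C dae.
  exact: subdivides_hirzebruch.
by apply: hirzebruch_fan_invariant; rewrite -?Ae ?AK.
Qed.
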